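(* Let $\boldsymbol{\gamma}\ge 0$ be an uplink SINR vector such that $\mathbf{I}-\mathbf{F}(\boldsymbol{\gamma})$ and $\mathbf{I}-\mathbf{H}(\boldsymbol{\gamma})$ are invertible. Then $\boldsymbol{\gamma}$ is feasible, i.e. $0\le p_i(\boldsymbol{\gamma})\le p_i^{\max}$ for all $i\in\mathcal{M}$, if and only if $$0\le \Phi_m(\boldsymbol{\gamma})\le \Phi^{\max}_m(\boldsymbol{\gamma})\quad\text{for all } m\in\mathcal{B},$$ where $\boldsymbol{\Phi}(\boldsymbol{\gamma})=(\mathbf{I}-\mathbf{H}(\boldsymbol{\gamma}))^{-1}\mathbf{N}$ and $\Phi^{\max}_m(\boldsymbol{\gamma})=\min_{i\in\mathcal{M}^{\mathcal{B}}_m}\frac{p_i^{\max}h_{m,i}(\gamma_i+1)}{\gamma_i}$ (terms with $\gamma_i=0$, and the minimum over an empty set, being interpreted as $+\infty$).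
   Context: Uplink cellular model: users $\mathcal{M}=\{1,\dots,M\}$, BSs $\mathcal{B}=\{1,\dots,B\}$; user $i$ served by BS $b_i$, $\mathcal{M}^{\mathcal{B}}_m=\{i:b_i=m\}$. Uplink path gains $h_{m,i}>0$ (user $i$ to BS $m$), noise $N_m>0$ at BS $m$, maximum user powers $p_i^{\max}>0$. $\mathbf{p}(\boldsymbol{\gamma})=(\mathbf{I}-\mathbf{F}(\boldsymbol{\gamma}))^{-1}\mathbf{U}(\boldsymbol{\gamma})$ is the power vector achieving SINR vector $\boldsymbol{\gamma}$, where $U_i=\gamma_iN_{b_i}/h_{b_i,i}$, $F_{ii}=0$, $F_{ij}=\gamma_ih_{b_i,j}/h_{b_i,i}$ ($i\neq j$). With $\theta_i=\gamma_i/(\gamma_i+1)$, the $B\times B$ matrix $\mathbf{H}(\boldsymbol{\gamma})$ has $H_{mm}=\sum_{i\in\mathcal{M}^{\mathcal{B}}_m}\theta_i$ and $H_{mn}=\sum_{i\in\mathcal{M}^{\mathcal{B}}_n}\frac{h_{m,i}}{h_{n,i}}\theta_i$ for $m\ne n$; $\mathbf{N}=(N_1,\dots,N_B)^{\mathrm T}$. *)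

From HB Require Import structures.
From mathcomp Require Import all_boot all_order all_algebra.
Set Implicit Arguments. Unset Strict Implicit. Unset Printing Implicit Defensive.
Import Order.TTheory GRing.Theory Num.Theory.
Local Open Scope ring_scope.

Section Uplink.
Variables (R : realFieldType) (M B : nat).
(* b i : serving BS of user i;  h m i : path gain from user i to BS m;
   N m : noise at BS m;  gamma i : SINR target of user i. *)
Variables (b : 'I_M -> 'I_B) (h : 'I_B -> 'I_M -> R) (N : 'I_B -> R)
          (gamma : 'I_M -> R).

Definition Umx : 'cV[R]_M := \col_i (gamma i * N (b i) / h (b i) i).

Definition Fmx : 'M[R]_M :=
  \matrix_(i, j) (if i == j then 0 else gamma i * h (b i) j / h (b i) i).

Definition pvec : 'cV[R]_M := invmx (1%:M - Fmx) *m Umx.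

Definition theta (i : 'I_M) : R := gamma i / (gamma i + 1).

Definition Hmx : 'M[R]_B :=
  \matrix_(m, n) (if m == n then \sum_(i | b i == m) theta i
                  else \sum_(i | b i == n) (h m i / h n i) * theta i).

Definition Ncol : 'cV[R]_B := \col_m N m.

Definition Phi : 'cV[R]_B := invmx (1%:M - Hmx) *m Ncol.

(* Extended reals R \cup {+oo}: None stands for +oo. *)
Definition omin (x y : option R) : option R :=
  match x, y with
  | None, _ => y
  | _, None => x
  | Some a, Some c => Some (Num.min a c)
  end.

Definition ole (x y : option R) : bool :=
  match x, y with
  | _, None => true
  | None, Some _ => false
  | Some a, Some c => a <= c
  end.

Definition Phimax (pmax : 'I_M -> R) (m : 'I_B) : option R :=
  \big[omin/None]_(i | b i == m)
     (if gamma i == 0 then None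
      else Some (pmax i * h m i * (gamma i + 1) / gamma i)).

End Uplink.

From HB Require Import structures.
From mathcomp Require Import all_boot all_order all_algebra.
From mathcomp Require Import ring.
Set Implicit Arguments. Unset Strict Implicit. Unset Printing Implicit Defensive.
Import Order.TTheory GRing.Theory Num.Theory.
Local Open Scope ring_scope.

(* Let T_m = N_m + sum_j h_{m,j} p_j be the total power received at BS m.
   The SINR equations (I - F) p = U say exactly p_i = theta_i T_{b_i} / h_{b_i,i},
   and substituting this back into the definition of T gives (I - H) T = N, so
   T = Phi.  Hence p >= 0 iff Phi >= 0, and the power constraint
   theta_i Phi_{b_i} / h_{b_i,i} <= pmax_i rearranges to
   Phi_{b_i} <= pmax_i h_{b_i,i} (gamma_i + 1) / gamma_i. *)

Lemma ole_omin (R : realFieldType) (x : R) (a c : option R) :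
  ole (Some x) (omin a c) = ole (Some x) a && ole (Some x) c.
Proof. by case: a => [a|]; case: c => [c|] //=; rewrite ?le_min ?andbT. Qed.

Lemma ole_big_omin (R : realFieldType) (I : Type) (x : R) (s : seq I)
    (P : pred I) (f : I -> option R) :
  ole (Some x) (\big[@omin R/None]_(i <- s | P i) f i) =
  all (fun i => P i ==> ole (Some x) (f i)) s.
Proof.
elim: s => [|a s IHs]; first by rewrite big_nil.
by rewrite big_cons [all _ _]/=; case: (P a); rewrite ?ole_omin IHs.
Qed.

Lemma ler_theta_pdiv (R : realFieldType) (g T c pm : R) :
  0 <= g -> 0 < c -> 0 <= pm ->
  (g / (g + 1) * T / c <= pm) =
  ole (Some T) (if g == 0 then None else Some (pm * c * (g + 1) / g)).
Proof.
move=> g_ge0 c_gt0 pm_ge0.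
have [->|g_neq0] := eqVneq g 0; first by rewrite !mul0r pm_ge0.
have g_gt0 : 0 < g by rewrite lt_def g_neq0.
have g1_gt0 : 0 < g + 1 by rewrite ltr_wpDl.
have -> : g / (g + 1) * T / c = (g * T) / ((g + 1) * c).
  by field; rewrite !gt_eqF.
rewrite /= ler_pdivrMr ?mulr_gt0 // ler_pdivlMr //.
by rewrite mulrC [pm * c * _]mulrAC -mulrA.
Qed.

Section UplinkPowers.
Variables (R : realFieldType) (M B : nat).
Variables (b : 'I_M -> 'I_B) (h : 'I_B -> 'I_M -> R) (N : 'I_B -> R)
          (gamma : 'I_M -> R).
Hypothesis h_gt0 : forall m i, 0 < h m i.
Hypothesis gamma_ge0 : forall i, 0 <= gamma i.

Definition received_power (p : 'cV[R]_M) : 'cV[R]_B :=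
  \col_m (N m + \sum_j h m j * p j 0).

Lemma theta_ge0 i : 0 <= theta gamma i.
Proof. by rewrite divr_ge0 // addr_ge0. Qed.

Lemma sinr_received_power (p : 'cV[R]_M) :
  (1%:M - Fmx b h gamma) *m p = Umx b h N gamma ->
  forall i, p i 0 = theta gamma i * received_power p (b i) 0 / h (b i) i.
Proof.
move=> /matrixP sinr i; move: (sinr i 0).
rewrite mulmxBl mul1mx !mxE (bigD1 i) //= !mxE eqxx mul0r add0r.
under eq_bigr => j /negbTE ji do rewrite mxE eq_sym ji.
set S := \sum_(j | j != i) h (b i) j * p j 0.
have -> : \sum_(j | j != i) gamma i * h (b i) j / h (b i) i * p j 0 =
          gamma i / h (b i) i * S.
  by rewrite mulr_sumr; apply: eq_bigr => j _; ring.
move=> /(canRL (subrK _)) p_i.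
rewrite /theta /received_power (bigD1 i) //= -/S p_i; field.
by rewrite !gt_eqF // ltr_wpDl.
Qed.

Lemma Hmx_received_power (p : 'cV[R]_M) :
  (forall i, p i 0 = theta gamma i * received_power p (b i) 0 / h (b i) i) ->
  (1%:M - Hmx b h gamma) *m received_power p = Ncol N.
Proof.
move=> pT; apply/matrixP => m k; rewrite (ord1 k) mulmxBl mul1mx !mxE.
suff -> : \sum_n Hmx b h gamma m n * received_power p n 0 =
          \sum_j h m j * p j 0 by ring.
under eq_bigr => n _.
  have -> : Hmx b h gamma m n =
            \sum_(i | b i == n) h m i / h n i * theta gamma i.
    rewrite mxE; case: eqP => // <-.
    by apply: eq_bigr => i _; rewrite divff ?mul1r // gt_eqF.
  rewrite mulr_suml; over.
rewrite [RHS](partition_big b xpredT) //=.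
apply: eq_bigr => n _; apply: eq_bigr => j /eqP <-.
by rewrite pT; field; rewrite gt_eqF.
Qed.

Lemma received_power_ge0 (p : 'cV[R]_M) :
  (forall m, 0 < N m) -> (forall i, 0 <= p i 0) ->
  forall m, 0 <= received_power p m 0.
Proof.
move=> N_gt0 p_ge0 m; rewrite mxE addr_ge0 //; first exact: ltW.
by apply: sumr_ge0 => j _; rewrite mulr_ge0 // ltW.
Qed.

Lemma received_power_pvec :
  (1%:M - Fmx b h gamma) \in unitmx -> (1%:M - Hmx b h gamma) \in unitmx ->
  received_power (pvec b h N gamma) = Phi b h N gamma.
Proof.
move=> F_unit H_unit; have sinr := mulKVmx F_unit (Umx b h N gamma).
by rewrite /Phi -(Hmx_received_power (sinr_received_power sinr)) mulKmx.
Qed.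

End UplinkPowers.

Theorem corollary1 (R : realFieldType) (M B : nat)
  (b : 'I_M -> 'I_B) (h : 'I_B -> 'I_M -> R) (N : 'I_B -> R)
  (pmax : 'I_M -> R) (gamma : 'I_M -> R) :
  (forall m i, 0 < h m i) ->
  (forall m, 0 < N m) ->
  (forall i, 0 < pmax i) ->
  (forall i, 0 <= gamma i) ->
  (1%:M - Fmx b h gamma) \in unitmx ->
  (1%:M - Hmx b h gamma) \in unitmx ->
  ((forall i : 'I_M, 0 <= pvec b h N gamma i 0 /\ pvec b h N gamma i 0 <= pmax i)
   <->
   (forall m : 'I_B, 0 <= Phi b h N gamma m 0 /\
      ole (Some (Phi b h N gamma m 0)) (Phimax b h gamma pmax m))).
Proof.
move=> h_gt0 N_gt0 pmax_gt0 gamma_ge0 F_unit H_unit.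
set p := pvec b h N gamma.
have TPhi := received_power_pvec N h_gt0 gamma_ge0 F_unit H_unit.
have pT := sinr_received_power h_gt0 gamma_ge0 (mulKVmx F_unit _ : _ *m p = _).
have p_le_pmax i : (p i 0 <= pmax i) =
    ole (Some (Phi b h N gamma (b i) 0))
        (if gamma i == 0 then None
         else Some (pmax i * h (b i) i * (gamma i + 1) / gamma i)).
  by rewrite pT TPhi ler_theta_pdiv // ltW.
split=> [feas m | Phi_ok i].
  split; first by rewrite -TPhi; apply: received_power_ge0 => // i; case: (feas i).
  rewrite ole_big_omin; apply/allP => i _; apply/implyP => /eqP <-.
  by rewrite -p_le_pmax; case: (feas i).
have [Phi_ge0 Phi_le] := Phi_ok (b i).
split; last first.
  move: Phi_le; rewrite p_le_pmax ole_big_omin => /allP.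
  by move=> /(_ i (mem_index_enum _)); rewrite eqxx.
rewrite pT TPhi; apply: mulr_ge0; last by rewrite invr_ge0 ltW.
exact: mulr_ge0 (theta_ge0 gamma_ge0 i) Phi_ge0.
Qed.
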